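(* The category of cubes $\widehat{\square}$ (the maximal category of cubes, containing all adjacency-preserving maps) is shell-complete.
   Context: $[0]=\{()\}$, $[n]=\{0,1\}^n$ ($n\ge1$) with the product order. A map $f:[m]\to[n]$ is adjacency-preserving if it is strictly increasing and for $x,y\in[m]$ at Hamming distance $1$, $f(x),f(y)$ are at Hamming distance $1$. $\widehat\square$ is the category with objects $[n]$, $n\ge0$, and all adjacency-preserving maps. For a category $\mathcal A$ of this kind (with objects $[n]$), an $\mathcal A$-set is a presheaf on $\mathcal A$, $\mathcal A[p]=\mathcal A(-,[p])$, $K_{\le1}$ is truncation to the full subcategory on $[0],[1]$, and $\mathrm{cosk}_1^{\mathcal A}$ is the right adjoint to this truncation. $\mathcal A$ is shell-complete if for every $p\ge2$ the canonical map $\mathcal A[p]\to\mathrm{cosk}_1^{\mathcal A}(\mathcal A[p]_{\le1})$ (adjoint to the identity of $\mathcal A[p]_{\le1}$) is an isomorphism. *)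

From HB Require Import structures.
From mathcomp Require Import all_boot.
Set Implicit Arguments. Unset Strict Implicit. Unset Printing Implicit Defensive.

(* [n] = {0,1}^n ; [0] has exactly one element (the empty function). *)
Definition cube (n : nat) := {ffun 'I_n -> bool}.

Definition cle n (x y : cube n) : bool := [forall i, x i ==> y i].
Definition clt n (x y : cube n) : bool := cle x y && (x != y).
Definition hamming n (x y : cube n) : nat := #|[set i | x i != y i]|.

Definition adjp m n (f : {ffun cube m -> cube n}) : bool :=
  [forall x, forall y, clt x y ==> clt (f x) (f y)] &&
  [forall x, forall y, (hamming x y == 1) ==> (hamming (f x) (f y) == 1)].

Definition Hom m n := {f : {ffun cube m -> cube n} | adjp f}.

Lemma adjp_id n : adjp [ffun x : cube n => x].
Proof.
apply/andP; split; apply/forallP=> x; apply/forallP=> y; rewrite !ffunE;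
  exact/implyP.
Qed.

Lemma adjp_comp m n p (f : {ffun cube m -> cube n}) (g : {ffun cube n -> cube p}) :
  adjp f -> adjp g -> adjp [ffun x => g (f x)].
Proof.
move=> /andP[/forallP Hf1 /forallP Hf2] /andP[/forallP Hg1 /forallP Hg2].
apply/andP; split; apply/forallP=> x; apply/forallP=> y; rewrite !ffunE;
  apply/implyP=> h.
- move/forallP: (Hg1 (f x)) => /(_ (f y)) /implyP; apply.
  by move/forallP: (Hf1 x) => /(_ y) /implyP; apply.
- move/forallP: (Hg2 (f x)) => /(_ (f y)) /implyP; apply.
  by move/forallP: (Hf2 x) => /(_ y) /implyP; apply.
Qed.

Definition idH n : Hom n n := exist (fun f => is_true (adjp f)) _ (adjp_id n).

Definition compH m n p (g : Hom n p) (f : Hom m n) : Hom m p :=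
  exist (fun h => is_true (adjp h)) _ (adjp_comp (proj2_sig f) (proj2_sig g)).

Lemma comp_id_r m n (g : Hom m n) : compH g (idH m) = g.
Proof. by apply: val_inj; apply/ffunP=> x; rewrite /= !ffunE. Qed.

Lemma comp_assoc m n p q (h : Hom p q) (g : Hom n p) (f : Hom m n) :
  compH h (compH g f) = compH (compH h g) f.
Proof. by apply: val_inj; apply/ffunP=> x; rewrite /= !ffunE. Qed.

(* presheaves on the full subcategory of \widehat\square on [0],[1]
   (objects indexed by i : 'I_2, i.e. [0] and [1]) *)
Unset Implicit Arguments.
Record tpsh := TPsh {
  tob : 'I_2 -> Type;
  tact : forall i j : 'I_2, Hom i j -> tob j -> tob i;
  tact_id : forall (i : 'I_2) x, tact i i (idH i) x = x;
  tact_comp : forall (i j k : 'I_2) (f : Hom i j) (g : Hom j k) x,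
      tact i k (compH g f) x = tact i j f (tact j k g x)
}.

Record tnat (X Y : tpsh) := TNat {
  tcomp : forall i : 'I_2, tob X i -> tob Y i;
  tnatural : forall (i j : 'I_2) (f : Hom i j) (x : tob X j),
      tcomp i (tact X i j f x) = tact Y i j f (tcomp j x)
}.
Set Implicit Arguments.
Arguments tact t {i j} _ _.
Arguments tcomp {X Y} t i _.

Definition tnat_comp X Y Z (b : tnat Y Z) (a : tnat X Y) : tnat X Z.
Proof.
refine (@TNat X Z (fun i x => tcomp b i (tcomp a i x)) _).
by move=> i j f x; rewrite !tnatural.
Defined.

(* K_{<=1}(\widehat\square[p]) : truncation of the representable presheaf *)
Definition tyon (p : nat) : tpsh.
Proof.
refine (@TPsh (fun i => Hom i p) (fun i j f g => compH g f) _ _).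
- by move=> i x; exact: comp_id_r.
- by move=> i j k f g x; exact: comp_assoc.
Defined.

Definition tyon_map m n (g : Hom m n) : tnat (tyon m) (tyon n).
Proof.
refine (@TNat (tyon m) (tyon n) (fun i (x : Hom i m) => compH g x) _).
by move=> i j f x /=; rewrite comp_assoc.
Defined.

(* cosk_1 Y, the right adjoint to truncation:
   (cosk_1 Y)_n = Hom(K_{<=1}(\widehat\square[n]), Y), with the
   presheaf action of g : [m] -> [n] given by precomposition. *)
Definition cosk_ob (Y : tpsh) (n : nat) : Type := tnat (tyon n) Y.
Definition cosk_act (Y : tpsh) m n (g : Hom m n) (a : cosk_ob Y n) : cosk_ob Y m :=
  tnat_comp a (tyon_map g).

(* The canonical map \widehat\square[p] -> cosk_1(\widehat\square[p]_{<=1}),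
   adjoint to the identity of \widehat\square[p]_{<=1}; its component at [n]
   sends f : [n] -> [p] to K_{<=1}(f_* ). *)
Definition can_map (p n : nat) (f : Hom n p) : cosk_ob (tyon p) n := tyon_map f.

(* \widehat\square is shell-complete: for every p >= 2 the canonical map is an
   isomorphism of presheaves, i.e. it has a natural two-sided inverse. *)
Definition shell_complete : Prop :=
  forall p : nat, 2 <= p ->
  exists psi : forall n : nat, cosk_ob (tyon p) n -> Hom n p,
    [/\ (forall n (f : Hom n p), psi n (can_map f) = f),
        (forall n (a : cosk_ob (tyon p) n), can_map (psi n a) = a)
      & (forall m n (g : Hom m n) (a : cosk_ob (tyon p) n),
            psi m (cosk_act g a) = compH (psi n a) g)].

(* A cell [a] of cosk_1(\widehat\square[p]_{<=1}) at [n] is a compatible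
   family of vertices and edges of [p] indexed by the vertices and edges of
   [n].  Naturality along the points [0] -> [i] shows that [a] is determined
   by its vertex map v : [n] -> [p], which acts on every cell by
   postcomposition.  Since [a] sends each edge of [n] to an edge of [p], the
   map v sends covering pairs (x < y at Hamming distance 1) to covering
   pairs; as every strict inequality in {0,1}^n is a chain of coverings, v is
   strictly increasing and hence adjacency-preserving.  So v is the unique
   map [n] -> [p] inducing [a].  Nothing here depends on p. *)
From Stdlib Require Import ProofIrrelevance FunctionalExtensionality.
From mathcomp Require Import all_boot.

Set Implicit Arguments. Unset Strict Implicit. Unset Printing Implicit Defensive.

Section CubeOrder.
Variable n : nat.
Implicit Types x y z : cube n.

Lemma cle_trans x y z : cle x y -> cle y z -> cle x z.
Proof.
move=> /forallP hxy /forallP hyz; apply/forallP=> i; apply/implyP=> hx.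
by move/implyP: (hyz i); apply; move/implyP: (hxy i); apply.
Qed.

Lemma cle_anti x y : cle x y -> cle y x -> x = y.
Proof.
move=> /forallP hxy /forallP hyx; apply/ffunP=> i.
by move: (hxy i) (hyx i); case: (x i); case: (y i).
Qed.

Lemma clt_trans x y z : clt x y -> clt y z -> clt x z.
Proof.
move=> /andP[lexy nexy] /andP[leyz neyz]; rewrite /clt (cle_trans lexy leyz) /=.
by apply: contra nexy => /eqP exz; rewrite -exz in leyz; rewrite (cle_anti lexy leyz).
Qed.

Lemma hammingC x y : hamming x y = hamming y x.
Proof. by apply: eq_card => i; rewrite !inE eq_sym. Qed.

Lemma hamming_eq0 x y : (hamming x y == 0) = (x == y).
Proof.
rewrite cards_eq0; apply/eqP/eqP => [exy|->].
  apply/ffunP=> i; have : i \notin [set j | x j != y j] by rewrite exy inE.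
  by rewrite inE negbK => /eqP.
by apply/setP=> i; rewrite !inE eqxx.
Qed.

Lemma hamming1_clt x y : hamming x y == 1 -> clt x y || clt y x.
Proof.
move=> /cards1P[i diff_i].
have neq_i : x i != y i by have := set11 i; rewrite -diff_i inE.
have eq_off j : j != i -> x j = y j.
  move=> nji; have : j \notin [set j | x j != y j] by rewrite diff_i inE.
  by rewrite inE negbK => /eqP.
have nexy : x != y by apply: contraNneq neq_i => ->.
have le_at (u v : cube n) : u i = false -> v i = true ->
    (forall j, j != i -> u j = v j) -> cle u v.
  move=> ui vi uv; apply/forallP=> j; case: (eqVneq j i) => [->|/uv ->].
    by rewrite ui.
  exact: implybb.
move: neq_i; case xi: (x i); case yi: (y i) => // _.
  by rewrite [clt y x]/clt [y == x]eq_sym nexy le_at ?orbT // => j /eq_off.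
by rewrite [clt x y]/clt nexy le_at.
Qed.

Lemma cle_hammingS x y k : cle x y -> hamming x y = k.+1 ->
  exists z, [/\ clt x z, hamming x z == 1, cle z y & hamming z y = k].
Proof.
move=> lexy hxy.
have [i] : exists i, i \in [set j | x j != y j].
  by apply/set0Pn; rewrite -cards_eq0 [#|_|]hxy.
rewrite inE => neq_i.
have [xi yi] : x i = false /\ y i = true.
  by move/forallP: lexy => /(_ i); move: neq_i; case: (x i); case: (y i).
pose z : cube n := [ffun j => (j == i) || x j].
have zi : z i = true by rewrite ffunE eqxx.
have z_off j : j != i -> z j = x j by rewrite ffunE => /negbTE ->.
have diff_xz : [set j | x j != z j] = [set i].
  by apply/setP=> j; rewrite !inE ffunE; case: (eqVneq j i) => [->|]; rewrite ?xi ?eqxx.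
have diff_xy : [set j | x j != y j] = i |: [set j | z j != y j].
  apply/setP=> j; rewrite !inE; case: (eqVneq j i) => [->|/z_off -> //].
  by rewrite xi yi zi.
exists z; split.
- rewrite /clt; apply/andP; split.
    by apply/forallP=> j; rewrite ffunE; apply/implyP => ->; rewrite orbT.
  by apply/eqP=> exz; move: zi; rewrite -exz xi.
- by rewrite /hamming diff_xz cards1.
- apply/forallP=> j; case: (eqVneq j i) => [->|/z_off ->]; first by rewrite zi yi.
  by move/forallP: lexy.
- by apply/eqP; rewrite -eqSS -hxy /hamming diff_xy cardsU1 inE zi yi.
Qed.

End CubeOrder.

Definition covering_preserving m n (f : cube m -> cube n) : Prop :=
  forall x y, clt x y -> hamming x y == 1 ->
    clt (f x) (f y) && (hamming (f x) (f y) == 1).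

Lemma covering_preserving_incr m n (f : cube m -> cube n) :
  covering_preserving f -> forall x y, clt x y -> clt (f x) (f y).
Proof.
move=> fcov x y ltxy.
have : 0 < hamming x y by rewrite lt0n hamming_eq0; case/andP: ltxy.
case Hxy: (hamming x y) => [//|k] _.
elim: k x Hxy ltxy => [|k IH] x Hxy /andP[lexy _].
  have [z [ltxz hxz lezy /eqP]] := cle_hammingS lexy Hxy.
  by rewrite hamming_eq0 => /eqP <-; case/andP: (fcov _ _ ltxz hxz).
have [z [ltxz hxz lezy hzy]] := cle_hammingS lexy Hxy.
have ltzy : clt z y by rewrite /clt lezy -hamming_eq0 hzy.
by apply: clt_trans (IH _ hzy ltzy); case/andP: (fcov _ _ ltxz hxz).
Qed.

Lemma covering_preserving_adjp m n (f : {ffun cube m -> cube n}) :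
  covering_preserving f -> adjp f.
Proof.
move=> fcov; apply/andP; split; apply/forallP=> x; apply/forallP=> y; apply/implyP.
  exact: covering_preserving_incr.
move=> hxy; case/orP: (hamming1_clt hxy) => ltxy.
  by have /andP[_ ->] := fcov _ _ ltxy hxy.
rewrite hammingC in hxy; rewrite hammingC.
by have /andP[_ ->] := fcov _ _ ltxy hxy.
Qed.

Lemma cube0_eq (u v : cube 0) : u = v.
Proof. by apply/ffunP => -[]. Qed.

Definition vertex0 : cube 0 := [ffun _ => false].

Lemma adjp_const n (x : cube n) : adjp [ffun _ : cube 0 => x].
Proof.
apply/andP; split; apply/forallP=> u; apply/forallP=> v; rewrite (cube0_eq u v).
  by rewrite /clt eqxx andbF.
by apply/implyP; rewrite (eqP (_ : hamming v v == 0)) // hamming_eq0.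
Qed.

Definition point n (x : cube n) : Hom 0 n := exist (fun f => adjp f) _ (adjp_const x).

Lemma compH_point m n (g : Hom m n) (x : cube m) : compH g (point x) = point (val g x).
Proof. by apply: val_inj; apply/ffunP=> u; rewrite /= !ffunE. Qed.

Lemma cube1_eq (b c : cube 1) : (b == c) = (b ord0 == c ord0).
Proof.
apply/eqP/eqP => [->//|e]; apply/ffunP=> i; by rewrite (ord1 i).
Qed.

Lemma hamming_cube1 (b c : cube 1) : hamming b c = (b ord0 != c ord0).
Proof.
rewrite /hamming.
have -> : [set i | b i != c i] = if b ord0 != c ord0 then [set ord0] else set0.
  by apply/setP=> i; rewrite (ord1 i) inE; case: ifP => h; rewrite ?inE ?eqxx ?h.
by case: ifP; rewrite ?cards1 ?cards0.
Qed.

Definition bot1 : cube 1 := [ffun _ => false].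
Definition top1 : cube 1 := [ffun _ => true].

Lemma adjp_ends n (g : {ffun cube 1 -> cube n}) : adjp g ->
  clt (g bot1) (g top1) && (hamming (g bot1) (g top1) == 1).
Proof.
case/andP=> /forallP/(_ bot1)/forallP/(_ top1)/implyP incr.
move=> /forallP/(_ bot1)/forallP/(_ top1)/implyP adj.
rewrite incr ?adj //; first by rewrite hamming_cube1 !ffunE.
by rewrite /clt cube1_eq !ffunE andbT; apply/forallP=> i; rewrite !ffunE.
Qed.

Lemma adjp_edge n (x y : cube n) : clt x y -> hamming x y == 1 ->
  adjp [ffun b : cube 1 => if b ord0 then y else x].
Proof.
move=> ltxy hxy.
apply/andP; split; apply/forallP=> b; apply/forallP=> c; apply/implyP; rewrite !ffunE.
  rewrite /clt cube1_eq; case/andP=> /forallP/(_ ord0).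
  by case: (b ord0); case: (c ord0).
rewrite hamming_cube1; case: (b ord0); case: (c ord0) => //; by rewrite hammingC.
Qed.

Definition edge n (x y : cube n) (ltxy : clt x y) (hxy : hamming x y == 1) : Hom 1 n :=
  exist (fun f => adjp f) _ (adjp_edge ltxy hxy).

Lemma tnat_ext X Y (a b : tnat X Y) :
  (forall i x, tcomp a i x = tcomp b i x) -> a = b.
Proof.
case: a b => ca na [cb nb] /= eab.
have eq_c : ca = cb.
  by do 2 apply: functional_extensionality_dep => ?; exact: eab.
by subst cb; f_equal; apply: proof_irrelevance.
Qed.

Section CoskCell.
Variables (p n : nat) (a : cosk_ob (tyon p) n).

Definition vertex_map : {ffun cube n -> cube p} :=
  [ffun x => val (tcomp a ord0 (point x)) vertex0].

Lemma tcomp_vertex_map (i : 'I_2) (f : Hom i n) (u : cube i) :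
  val (tcomp a i f) u = vertex_map (val f u).
Proof.
have := @tnatural _ _ a ord0 i (point u) f; rewrite /= compH_point ffunE => ->.
by rewrite /= !ffunE.
Qed.

Lemma vertex_map_covering : covering_preserving vertex_map.
Proof.
move=> x y ltxy hxy.
pose e := tcomp a (@Ordinal 2 1 isT) (edge ltxy hxy).
have ends (b : cube 1) : val e b = vertex_map (val (edge ltxy hxy) b).
  exact: tcomp_vertex_map.
by have := adjp_ends (proj2_sig e); rewrite !ends /= !ffunE.
Qed.

Definition hom_of_cosk : Hom n p :=
  exist (fun f => adjp f) _ (covering_preserving_adjp vertex_map_covering).

End CoskCell.

Theorem theorem7p5 :
  forall p : nat, 2 <= p ->
  exists psi : forall n : nat, cosk_ob (tyon p) n -> Hom n p,
    [/\ (forall n (f : Hom n p), psi n (can_map f) = f),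
        (forall n (a : cosk_ob (tyon p) n), can_map (psi n a) = a)
      & (forall m n (g : Hom m n) (a : cosk_ob (tyon p) n),
            psi m (cosk_act g a) = compH (psi n a) g)].
Proof.
move=> p _; exists (@hom_of_cosk p); split.
- by move=> n f; apply: val_inj; apply/ffunP=> x; rewrite /= !ffunE.
- move=> n a; apply: tnat_ext => i f; apply: val_inj; apply/ffunP=> u.
  by rewrite /= ffunE tcomp_vertex_map.
- move=> m n g a; apply: val_inj; apply/ffunP=> x.
  by rewrite /= !ffunE /cosk_act /= compH_point.
Qed.
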